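(* Let $G$ be a group, $s$ a central involution of $G$, $T$ a finite tree with at least one edge, and $\zeta\in G(L(T))$. Then there exists a $G$-phase $H$ of $T$ with $\Psi_L(H)=\zeta$ if and only if $\zeta\sim\mathbf{s}$.
   Context: A $G$-gain graph $(\Gamma,\psi)$ consists of a graph $\Gamma=(V_\Gamma,E_\Gamma)$ and a map $\psi$ assigning to each ordered pair $(u,v)$ of adjacent vertices an element of $G$ with $\psi(v,u)=\psi(u,v)^{-1}$; $G(\Gamma)$ is the set of such maps. For an involution $s$, $\mathbf{s}$ is the gain function constantly equal to $s$. Gain functions $\psi_1,\psi_2$ on $\Gamma$ are switching equivalent ($\psi_1\sim\psi_2$) if there is $f:V_\Gamma\to G$ with $\psi_2(u,v)=f(u)^{-1}\psi_1(u,v)f(v)$ for all adjacent $u,v$. The line graph $L(\Gamma)$ has vertex set $E_\Gamma$, two edges being adjacent iff they share an endpoint. With $V_\Gamma=\{v_1,\dots,v_n\}$, $E_\Gamma=\{e_1,\dots,e_m\}$, a $G$-phase of $\Gamma$ is a matrix $H=(H_{i,k})$ with $H_{i,k}\in G$ if $v_i\in e_k$ and $H_{i,k}=0$ otherwise. Given a fixed central involution $s$ of $G$, $\Psi_L(H)\in G(L(\Gamma))$ is defined by $\Psi_L(H)(e_p,e_q)=s\,(H_{r,p})^{-1}H_{r,q}$, where $v_r$ is the common endpoint of the adjacent edges $e_p,e_q$. *)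

From HB Require Import structures.
From mathcomp Require Import all_boot.
From mathcomp Require Import monoid.

Set Implicit Arguments.
Unset Strict Implicit.
Unset Printing Implicit Defensive.

Local Open Scope group_scope.

Definition simple_graph (V : finType) (adj : rel V) : Prop :=
  symmetric adj /\ irreflexive adj.

Definition is_edge (V : finType) (adj : rel V) (e : {set V}) : bool :=
  [exists u, exists v, adj u v && (e == [set u; v])].

Definition edge (V : finType) (adj : rel V) := {e : {set V} | is_edge adj e}.

Definition incident (V : finType) (adj : rel V) (v : V) (e : edge adj) : bool :=
  v \in sval e.

(* Adjacency in the line graph L(Gamma): distinct edges sharing an endpoint. *)
Definition ladj (V : finType) (adj : rel V) (p q : edge adj) : bool :=
  (p != q) && [exists r, (r \in sval p) && (r \in sval q)].

Definition connected_graph (V : finType) (adj : rel V) : Prop :=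
  forall u v : V, connect adj u v.

Definition acyclic_graph (V : finType) (adj : rel V) : Prop :=
  ~ exists c : seq V, (2 < size c)%N /\ ucycle adj c.

Definition is_tree (V : finType) (adj : rel V) : Prop :=
  simple_graph adj /\ connected_graph adj /\ acyclic_graph adj.

(* Gain functions on a graph with vertex type X and adjacency a:
   psi is defined on ordered pairs of adjacent vertices (values on
   non-adjacent pairs are irrelevant), with psi(v,u) = psi(u,v)^-1. *)
Definition is_gain (G : groupType) (X : Type) (a : X -> X -> bool)
  (psi : X -> X -> G) : Prop :=
  forall x y, a x y -> psi y x = (psi x y)^-1.

Definition switching_equiv (G : groupType) (X : Type) (a : X -> X -> bool)
  (psi1 psi2 : X -> X -> G) : Prop :=
  exists f : X -> G, forall x y, a x y -> psi2 x y = (f x)^-1 * psi1 x y * f y.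

Definition const_gain (G : groupType) (X : Type) (s : G) : X -> X -> G :=
  fun _ _ => s.

Definition central_involution (G : groupType) (s : G) : Prop :=
  s * s = 1 /\ s != 1 /\ forall g : G, s * g = g * s.

(* A G-phase H of Gamma: H v e is the entry H_{v,e}; it is an element of G
   when v is an endpoint of e (entries at non-incident pairs are 0 in the
   paper and are simply never used here). *)
Definition phase (G : groupType) (V : finType) (adj : rel V) :=
  V -> edge adj -> G.

(* The common endpoint of two adjacent edges (defaulting arbitrarily to
   [pick] when none exists, which never happens for adjacent edges). *)
Definition PsiL (G : groupType) (s : G) (V : finType) (adj : rel V)
  (H : phase G adj) : edge adj -> edge adj -> G :=
  fun p q =>
    match [pick r | (r \in sval p) && (r \in sval q)] with
    | Some r => s * (H r p)^-1 * H r q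
    | None => s
    end.

From HB Require Import structures.
From mathcomp Require Import all_boot.
From mathcomp Require Import monoid.
From mathcomp Require Import zify.

(* Given a G-phase H of a tree T, record on each oriented edge (x, y) of T
   the "transfer" g(x, y) = H_{y,e} H_{x,e}^-1 of the edge e = {x, y}.  This
   is a gain function on T, and every gain function on a tree is balanced:
   it admits a potential c : V -> G with c(y) = g(x, y) c(x) along every edge
   (grow a connected vertex set one leaf at a time; acyclicity guarantees that
   a new vertex has a single neighbour in the set, so the potential extends
   consistently).  Then f(e) = H_{r,e}^-1 c(r) does not depend on the endpoint
   r of e, and as s is central
       Psi_L(H)(p, q) = s H_{r,p}^-1 H_{r,q} = f(p) s f(q)^-1,
   i.e. Psi_L(H) is switching equivalent to the constant gain s.  Conversely,
   if zeta(p, q) = f(p) s f(q)^-1 then the phase H_{r,e} = f(e)^-1 satisfies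
   Psi_L(H) = zeta. *)

Local Open Scope group_scope.

Section TreePotential.

Variables (G : groupType) (V : finType) (adj : rel V) (g : V -> V -> G).
Hypothesis adj_sym : symmetric adj.
Hypothesis adj_irr : irreflexive adj.
Hypothesis adj_conn : connected_graph adj.
Hypothesis adj_acyclic : acyclic_graph adj.
Hypothesis g_gain : forall x y, adj x y -> g y x = (g x y)^-1.

Definition induced (S : {set V}) : rel V :=
  [rel x y | [&& adj x y, x \in S & y \in S]].

Definition connected_in (S : {set V}) : Prop :=
  forall x y, x \in S -> y \in S -> connect (induced S) x y.

Lemma induced_sym (S : {set V}) : symmetric (induced S).
Proof. by move=> x y; rewrite /induced /= adj_sym [(x \in S) && _]andbC. Qed.

Definition potential_on (S : {set V}) (c : V -> G) : Prop :=
  forall x y, x \in S -> y \in S -> adj x y -> c y = g x y * c x.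

Lemma induced_path_in {S : {set V}} {x p} :
  path (induced S) x p -> all [in S] p.
Proof.
elim: p x => [//|y p IHp] x /= /andP[/and3P[_ _ yS] yp].
by rewrite yS (IHp y yp).
Qed.

Lemma exit_edge {S : {set V}} {x y} : x \in S -> y \notin S ->
  exists u v, [/\ adj u v, u \in S & v \notin S].
Proof.
have /connectP[p xp ->] := adj_conn x y.
elim: p x xp => [|z p IHp] x /=; first by move=> _ ->.
move=> /andP[xz zp] xS lastS.
case zS: (z \in S); first exact: IHp zp zS lastS.
by exists x, z; rewrite xz xS zS.
Qed.

(* Acyclicity: a vertex outside a connected set S has at most one neighbour
   in S, since two neighbours and a path between them inside S would close a
   cycle. *)
Lemma unique_attachment {S : {set V}} {u u' v} : connected_in S ->
  u \in S -> u' \in S -> v \notin S -> adj u v -> adj u' v -> u = u'.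
Proof.
move=> S_conn uS u'S vS uv u'v; apply/eqP; apply: contraT => neq_uu'.
have /connectP[p up lastp] := S_conn u u' uS u'S.
move: lastp; case: (shortenP up) => p' up' uniq_p' _ lastp'.
have p'S := induced_path_in up'.
exfalso; apply: adj_acyclic; exists (v :: u :: p'); split.
  by case: p' {up' uniq_p' p'S} lastp' => [/= eq_u'u|//]; rewrite eq_u'u eqxx in neq_uu'.
apply/andP; split.
  rewrite /cycle /= rcons_path -lastp' u'v andbT adj_sym uv /=.
  by apply: sub_path up' => a b /and3P[].
rewrite cons_uniq uniq_p' andbT inE negb_or; apply/andP; split.
  by apply: contraNneq vS => ->.
by apply: contra vS => /(allP p'S).
Qed.

(* Adding a vertex v attached to a connected set S by the edge (u, v) keeps
   the set connected, and a potential extends to v by c(v) = g(u, v) c(u). *)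
Lemma extend_potential {S : {set V}} {c u v} :
  connected_in S -> potential_on S c -> adj u v -> u \in S -> v \notin S ->
  exists c', connected_in (v |: S) /\ potential_on (v |: S) c'.
Proof.
move=> S_conn c_pot uv uS vS.
pose c' z := if z == v then g u v * c u else c z.
have c'S z : z \in S -> c' z = c z.
  by move=> zS; rewrite /c'; case: eqP => // ezv; rewrite -ezv zS in vS.
have c'v : c' v = g u v * c u by rewrite /c' eqxx.
exists c'; split.
  have to_u z : z \in v |: S -> connect (induced (v |: S)) z u.
    rewrite !inE => /orP[/eqP-> | zS].
      by apply: connect1; rewrite /induced /= adj_sym uv !inE eqxx uS orbT.
    apply: connect_sub (S_conn z u zS uS) => a b /and3P[ab aS bS].
    by apply: connect1; rewrite /induced /= ab !inE aS bS !orbT.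
  move=> a b aS bS; apply: connect_trans (to_u a aS) _.
  by rewrite (sym_connect_sym (induced_sym _)) to_u.
have to_v z : z \in S -> adj z v -> c' v = g z v * c' z.
  by move=> zS zv; rewrite c'v c'S // (unique_attachment S_conn uS zS vS uv zv).
move=> a b; rewrite !inE => /orP[/eqP-> | aS] /orP[/eqP-> | bS] ab.
- by rewrite adj_irr in ab.
- rewrite adj_sym in ab.
  by rewrite (to_v b bS ab) (g_gain b v ab) mulKg.
- exact: to_v.
- by rewrite !c'S //; apply: c_pot.
Qed.

Lemma grow_potential (r : V) n : n < #|V| ->
  exists (S : {set V}) (c : V -> G), [/\ #|S| = n.+1, connected_in S & potential_on S c].
Proof.
elim: n => [_ | n IHn ltnV].
  exists [set r], (fun _ => 1); split; first exact: cards1.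
    by move=> x y; rewrite !inE => /eqP-> /eqP->; apply: connect0.
  by move=> x y; rewrite !inE => /eqP-> /eqP->; rewrite adj_irr.
have [S [c [cardS S_conn c_pot]]] := IHn (ltnW ltnV).
have [x xS] : exists x, x \in S by apply/card_gt0P; rewrite cardS.
have [y yS] : exists y, y \notin S.
  have : 0 < #|~: S| by move: (cardsC S); rewrite cardS; lia.
  by case/card_gt0P => y; rewrite inE; exists y.
have [u [v [uv uS vS]]] := exit_edge xS yS.
have [c' [S'_conn c'_pot]] := extend_potential S_conn c_pot uv uS vS.
by exists (v |: S), c'; rewrite cardsU1 vS cardS.
Qed.

Lemma tree_potential : exists c : V -> G, forall x y, adj x y -> c y = g x y * c x.
Proof.
case: (pickP (fun _ : V => true)) => [r _ | V0].
  2: by exists (fun _ => 1) => x; have := V0 x.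
have [|S [c [cardS _ c_pot]]] := @grow_potential r #|V|.-1.
  by rewrite prednK //; apply/card_gt0P; exists r.
have allS z : z \in S.
  rewrite (subset_cardP _ (subsetT S)) ?inE // cardsT cardS prednK //.
  by apply/card_gt0P; exists z.
by exists c => x y; apply: c_pot.
Qed.

End TreePotential.

Section Phases.

Variables (G : groupType) (s : G) (V : finType) (adj : rel V).
Hypothesis s_central : forall x : G, s * x = x * s.

Lemma edge_ends (e : edge adj) : exists x y, adj x y /\ sval e = [set x; y].
Proof.
by case: e => e /= /existsP[x /existsP[y /andP[xy /eqP ->]]]; exists x, y.
Qed.

Lemma PsiL_common (H : phase G adj) {p q} : ladj p q ->
  exists2 r, (r \in sval p) && (r \in sval q) & PsiL s H p q = s * (H r p)^-1 * H r q.
Proof.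
rewrite /PsiL => /andP[_ /existsP[r0 r0pq]].
by case: pickP => [r rpq | none]; [exists r | rewrite none in r0pq].
Qed.

Definition transfer (H : phase G adj) (x y : V) : G :=
  if [pick e : edge adj | sval e == [set x; y]] is Some e
  then H y e * (H x e)^-1 else 1.

Lemma transferE (H : phase G adj) {x y} {e : edge adj} :
  sval e = [set x; y] -> transfer H x y = H y e * (H x e)^-1.
Proof.
move=> ex; rewrite /transfer; case: pickP => [e' /eqP e'x | none].
  by rewrite (_ : e' = e) //; apply: val_inj; rewrite /= e'x ex.
by move: (none e); rewrite ex eqxx.
Qed.

Lemma transfer_gain (H : phase G adj) x y : transfer H y x = (transfer H x y)^-1.
Proof.
have -> : transfer H y x =
    if [pick e : edge adj | sval e == [set x; y]] is Some e
    then H x e * (H y e)^-1 else 1.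
  by rewrite /transfer setUC; case: pickP.
by rewrite /transfer; case: pickP => [e _ | _]; rewrite ?invg1 // invgM invgK.
Qed.

Lemma PsiL_switching (H : phase G adj) : is_tree adj ->
  exists f : edge adj -> G, forall p q, ladj p q -> s = (f p)^-1 * PsiL s H p q * f q.
Proof.
move=> [[adj_sym adj_irr] [adj_conn adj_acyclic]].
have [c c_pot] := @tree_potential G V adj (transfer H)
  adj_sym adj_irr adj_conn adj_acyclic (fun x y _ => transfer_gain H x y).
have endpoint_indep (e : edge adj) r r' : r \in sval e -> r' \in sval e ->
    (H r e)^-1 * c r = (H r' e)^-1 * c r'.
  have [x [y [xy ex]]] := edge_ends e.
  have eq_xy : (H x e)^-1 * c x = (H y e)^-1 * c y.
    by rewrite (c_pot _ _ xy) (transferE H ex) !mulgA mulVg mul1g.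
  by rewrite ex !inE => /orP[]/eqP-> /orP[]/eqP->.
pose f (e : edge adj) := if [pick r | r \in sval e] is Some r then (H r e)^-1 * c r else 1.
have fE (e : edge adj) r : r \in sval e -> f e = (H r e)^-1 * c r.
  rewrite /f => re; case: pickP => [r' r'e | none]; first exact: endpoint_indep.
  by rewrite none in re.
exists f => p q pq; have [r /andP[rp rq] ->] := PsiL_common H pq.
rewrite (fE _ _ rp) (fE _ _ rq) invgM invgK !mulgA mulgK -(mulgA _ s) s_central mulgA mulgK.
by rewrite -s_central mulgVK.
Qed.

Lemma switching_PsiL (zeta : edge adj -> edge adj -> G) (f : edge adj -> G) :
  (forall p q, ladj p q -> s = (f p)^-1 * zeta p q * f q) ->
  forall p q, ladj p q -> PsiL s (fun _ e => (f e)^-1) p q = zeta p q.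
Proof.
move=> zeta_f p q pq; have [r _ ->] := PsiL_common (fun _ e => (f e)^-1) pq.
by rewrite invgK s_central (zeta_f p q pq) !mulgA mulgK mulgV mul1g.
Qed.

End Phases.

Theorem mainTheorem2 (G : groupType) (s : G) (V : finType) (adj : rel V)
  (zeta : edge adj -> edge adj -> G) :
  central_involution s ->
  is_tree adj ->
  (exists u v : V, adj u v) ->
  is_gain (@ladj V adj) zeta ->
  (exists H : phase G adj,
     forall p q : edge adj, ladj p q -> PsiL s H p q = zeta p q)
  <-> switching_equiv (@ladj V adj) zeta (@const_gain G (edge adj) s).
Proof.
move=> [_ [_ s_central]] tree _ _; split.
- move=> [H H_zeta]; have [f f_switch] := @PsiL_switching G s V adj s_central H tree.
  by exists f => p q pq; rewrite -H_zeta //; apply: f_switch.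
- by move=> [f f_switch]; exists (fun _ e => (f e)^-1); apply: switching_PsiL.
Qed.
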